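(* Let $(X,d)$ be a finite tree-like pseudometric space, and let $(\mathcal S,\alpha)$ be the unique positively weighted system of compatible splits of $X$ with $d=d_\alpha$. Then $$\operatorname{LIP}(X,d)=\sum_{\sigma\in\mathcal S}\alpha_\sigma S_\sigma$$ (Minkowski sum); in particular $\operatorname{LIP}(X,d)$ is a zonotope.
   Context: Let $X$ be a finite set, $n:=|X|$, $\{\mathbbm 1_k\}$ the standard basis of $\mathbb R^X$, $\mathbbm 1_A:=\sum_{x\in A}\mathbbm 1_x$. A split of $X$ is an unordered pair of nonempty disjoint subsets $A,B$ with $A\cup B=X$, written $A|B$. Splits $A|B$ and $C|D$ are compatible if at least one of $A\cap C,A\cap D,B\cap C,B\cap D$ is empty; a system of splits is compatible if its elements are pairwise compatible. For $\sigma=A|B$, $\delta_\sigma(i,j)=0$ if $i,j$ are in the same side, $1$ otherwise; for $\alpha\in\mathbb R_{\ge0}^{\mathcal S}$, $d_\alpha:=\sum_{\sigma\in\mathcal S}\alpha_\sigma\delta_\sigma$; the weighting is positive if all $\alpha_\sigma>0$. $S_\sigma:=\operatorname{conv}\{\tfrac{|B|}{n}\mathbbm 1_A-\tfrac{|A|}{n}\mathbbm 1_B,\ \tfrac{|A|}{n}\mathbbm 1_B-\tfrac{|B|}{n}\mathbbm 1_A\}$. For a pseudometric $d$, $\operatorname{LIP}(X,d):=\{x\in\mathbb R^X\mid\sum_i x_i=0,\ x_i-x_j\le d(i,j)\ \forall i,j\}$. An $X$-tree is a pair $(T,\phi)$ with $T$ a finite tree and $\phi:X\to V(T)$ a map whose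 image contains every vertex of degree at most $2$. A pseudometric $d$ on $X$ is tree-like if there are an $X$-tree $(T,\phi)$ and edge weights $w:E(T)\to\mathbb R_{>0}$ such that $d(x,y)$ equals the total weight of the unique path in $T$ from $\phi(x)$ to $\phi(y)$. It is known (and may be used) that a pseudometric is tree-like if and only if it equals $d_\alpha$ for a positively weighted compatible split system $(\mathcal S,\alpha)$, and that this system is unique; its splits correspond bijectively to edges of $T$ (the split of an edge $e$ separates the preimages under $\phi$ of the two components of $T-e$). *)

(* X is a finite type T; R^X is T -> R for a real field R. *)
From HB Require Import structures.
From mathcomp Require Import all_boot all_order all_algebra.
Set Implicit Arguments. Unset Strict Implicit. Unset Printing Implicit Defensive.
Import Order.TTheory GRing.Theory Num.Theory.
Local Open Scope ring_scope.

(* A split A|B of X is represented as the unordered pair {A, B} : {set {set T}},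
   with A, B nonempty, disjoint, covering X (so B = ~: A). *)
Definition is_split (T : finType) (s : {set {set T}}) : bool :=
  [exists A : {set T}, [&& s == [set A; ~: A], A != set0 & ~: A != set0]].

Definition compatible (T : finType) (s1 s2 : {set {set T}}) : bool :=
  [exists A in s1, exists C in s2, A :&: C == set0].

Definition compatible_system (T : finType) (S : {set {set {set T}}}) : bool :=
  [forall s1 in S, forall s2 in S, compatible s1 s2].

Definition split_system (T : finType) (S : {set {set {set T}}}) : bool :=
  [forall s in S, is_split s].

Definition split_delta (R : numDomainType) (T : finType) (s : {set {set T}})
  (i j : T) : R :=
  if [exists A in s, (i \in A) && (j \in A)] then 0 else 1.

Definition d_alpha (R : numDomainType) (T : finType) (S : {set {set {set T}}})
  (alpha : {set {set T}} -> R) (i j : T) : R :=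
  \sum_(s in S) alpha s * split_delta R s i j.

Definition is_pseudometric (R : numDomainType) (T : finType) (d : T -> T -> R) :=
  (forall i, d i i = 0) /\ (forall i j, 0 <= d i j) /\ (forall i j, d i j = d j i)
  /\ (forall i j k, d i k <= d i j + d j k).

Definition ind (R : numDomainType) (T : finType) (A : {set T}) (k : T) : R :=
  if k \in A then 1 else 0.

(* the vertex |B|/n 1_A - |A|/n 1_B of S_sigma attached to the side A (B = ~: A) *)
Definition split_vertex (R : numFieldType) (T : finType) (A : {set T}) (k : T) : R :=
  (#|~: A|%:R / #|T|%:R) * ind R A k - (#|A|%:R / #|T|%:R) * ind R (~: A) k.

Definition in_S_sigma (R : numFieldType) (T : finType) (s : {set {set T}})
  (p : T -> R) : Prop :=
  exists lam : {set T} -> R,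
    (forall A, A \in s -> 0 <= lam A) /\ \sum_(A in s) lam A = 1 /\
    (forall k, p k = \sum_(A in s) lam A * split_vertex R A k).

Definition LIP (R : numDomainType) (T : finType) (d : T -> T -> R) (x : T -> R) : Prop :=
  \sum_(i : T) x i = 0 /\ (forall i j, x i - x j <= d i j).

Definition in_minkowski_sum (R : numFieldType) (T : finType)
  (S : {set {set {set T}}}) (alpha : {set {set T}} -> R) (x : T -> R) : Prop :=
  exists p : {set {set T}} -> T -> R,
    (forall s, s \in S -> in_S_sigma s (p s)) /\
    (forall k, x k = \sum_(s in S) alpha s * p s k).

From HB Require Import structures.
From mathcomp Require Import all_boot all_order all_algebra ring lra.
Import Order.TTheory GRing.Theory Num.Theory.
Local Open Scope ring_scope.

(* A point of the Minkowski sum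
   satisfies the Lipschitz condition because a point of S_sigma varies by at
   most delta_sigma.  Conversely, given x in LIP(X, d_alpha), pick a split
   A|B of weight a and let d' be the metric of the remaining splits; since they
   are compatible with A|B, d' satisfies a four-point inequality across the
   cut, which is exactly what is needed to find m in [-a, a] such that
   x - m 1_A is Lipschitz for d'.  Induction on the split system writes x as
   a constant plus a combination of the 1_A with coefficients alpha_sigma t_sigma,
   |t_sigma| <= 1, and the zero-sum condition turns each 1_A into the vertex
   of S_sigma attached to A, scaled by t_sigma. *)

Definition is_lipschitz {R : numDomainType} {T : Type}
    (d : T -> T -> R) (x : T -> R) :=
  forall i j, x i - x j <= d i j.

Definition split_side {T : finType} (s : {set {set T}}) : {set T} :=
  odflt set0 [pick A in s].

Section Splits.
Context {R : realFieldType} {T : finType}.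
Implicit Types (A C : {set T}) (s : {set {set T}}) (S : {set {set {set T}}}).

Lemma split_sideP {s} : is_split s ->
  [/\ s = [set split_side s; ~: split_side s], split_side s != set0
    & ~: split_side s != set0].
Proof.
case/existsP => C /and3P [/eqP -> C0 CC0].
rewrite /split_side; case: pickP => [A /=|noA]; last first.
  by have := noA C; rewrite !inE eqxx.
by rewrite !inE => /orP [/eqP ->|/eqP ->]; rewrite ?setCK ?[[set ~: C; C]]setUC.
Qed.

Lemma split_deltaE C i j :
  split_delta R [set C; ~: C] i j = ((i \in C) != (j \in C))%:R.
Proof.
rewrite /split_delta; case: existsP => [[B /and3P []]|noB].
  rewrite !inE => /orP [] /eqP ->; rewrite ?inE; first by move=> -> ->.
  by move=> /negbTE -> /negbTE ->.
case iC: (i \in C); case jC: (j \in C) => //.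
  by case: noB; exists C; rewrite !inE eqxx iC jC.
by case: noB; exists (~: C); rewrite !inE eqxx iC jC orbT.
Qed.

(* The pairs i j and i' j' cross the cut A|~A, the pairs i j' and i' j do not. *)
Definition cut_four_point A (d : T -> T -> R) :=
  forall i j i' j', i \in A -> j' \in A -> j \notin A -> i' \notin A ->
  d i j' + d i' j <= d i j + d i' j'.

Lemma split_delta_four_point A C :
  compatible [set A; ~: A] [set C; ~: C] ->
  cut_four_point A (split_delta R [set C; ~: C]).
Proof.
case/existsP => A' /andP [A'A /existsP [C' /andP [C'C /eqP disj]]].
move=> i j i' j' iA j'A /negbTE jA /negbTE i'A; rewrite !split_deltaE.
have out z : z \in A' -> z \in C' -> False.
  by move=> zA zC; have := in_set0 z; rewrite -disj inE zA zC.
move: A'A C'C; rewrite !inE => /orP [] /eqP ? /orP [] /eqP ?; subst A' C';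
move: (out i) (out j) (out i') (out j'); rewrite ?inE iA jA j'A i'A;
case: (i \in C); case: (j \in C); case: (i' \in C); case: (j' \in C) => /=;
by do 4?[move=> /(_ isT isT) [] | move=> _]; lra.
Qed.

Lemma d_alphaD1 S (alpha : {set {set T}} -> R) s i j : s \in S ->
  d_alpha S alpha i j = alpha s * split_delta R s i j + d_alpha (S :\ s) alpha i j.
Proof. by move=> Ss; rewrite /d_alpha (big_setD1 s Ss). Qed.

Lemma d_alpha_four_point S (alpha : {set {set T}} -> R) A :
  split_system S -> (forall s, s \in S -> 0 <= alpha s) ->
  (forall s, s \in S -> compatible [set A; ~: A] s) ->
  cut_four_point A (d_alpha S alpha).
Proof.
move=> /forall_inP splitS alpha_ge0 compS i j i' j' iA j'A jA i'A.
rewrite /d_alpha -!big_split /=; apply: ler_sum => s Ss; rewrite -!mulrDr.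
apply: ler_wpM2l; first exact: alpha_ge0.
have [sE _ _] := split_sideP (splitS s Ss).
by rewrite sE; apply: (split_delta_four_point A) => //; rewrite -sE; apply: compS.
Qed.

End Splits.

Section Peel.
Context {R : realFieldType} {T : finType}.

Lemma scale_unit_interval (a m : R) :
  -a <= m <= a -> exists2 t, -1 <= t <= 1 & m = a * t.
Proof.
move=> /andP [lo hi]; case: (eqVneq a 0) => [a0|an0].
  exists 0; first lra.
  by rewrite mulr0; apply/le_anti/andP; split; lra.
have a_gt0 : 0 < a by rewrite lt_def an0; lra.
exists (m / a); last by rewrite mulrC divfK.
by rewrite ler_pdivlMr // ler_pdivrMr //; apply/andP; split; lra.
Qed.

(* The value m below is the largest lower bound forced on the jump of x
   across the cut; the four-point inequality shows it meets every upper bound. *)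
Lemma lipschitz_peel_cut (A : {set T}) (a : R) (d : T -> T -> R) (x : T -> R) :
  0 <= a -> cut_four_point A d ->
  is_lipschitz (fun i j => a * ((i \in A) != (j \in A))%:R + d i j) x ->
  exists2 t, -1 <= t <= 1 & is_lipschitz d (fun k => x k - a * t * ind R A k).
Proof.
move=> a_ge0 d4 lipx.
pose m := \big[Num.max/- a]_(p : T * T | (p.1 \in A) && (p.2 \notin A))
            (x p.1 - x p.2 - d p.1 p.2).
have m_ge : - a <= m by apply: bigmax_ge_id.
have le_m i j : i \in A -> j \notin A -> x i - x j - d i j <= m.
  by move=> iA jA; apply: (@le_bigmax_cond _ _ _ _ (i, j)); rewrite /= iA jA.
have m_le_a : m <= a.
  apply: bigmax_le => [|[i j] /andP /= [iA jA]]; first lra.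
  by have := lipx i j; rewrite iA (negbTE jA) /=; lra.
have m_le i' j' : i' \notin A -> j' \in A -> m <= d i' j' - x i' + x j'.
  move=> i'A j'A; apply: bigmax_le => [|[i j] /andP /= [iA jA]].
    by have := lipx i' j'; rewrite j'A (negbTE i'A) /=; lra.
  have := lipx i j'; have := lipx i' j; have := d4 i j i' j' iA j'A jA i'A.
  by rewrite iA j'A (negbTE i'A) (negbTE jA) /=; lra.
have [t t_bound mE] : exists2 t, -1 <= t <= 1 & m = a * t.
  by apply: scale_unit_interval; rewrite m_ge m_le_a.
exists t => // i j; rewrite -mE /ind.
have := lipx i j; case iA: (i \in A); case jA: (j \in A) => /= lip_ij.
- lra.
- by have := le_m i j iA (negbT jA); lra.
- by have := m_le i j (negbT iA) jA; lra.
- lra.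
Qed.

End Peel.

Section Decomposition.
Context {R : realFieldType} {T : finType}.
Implicit Types (S : {set {set {set T}}}) (alpha : {set {set T}} -> R).

Lemma d_alpha_lipschitz_decomposition S alpha :
  split_system S -> compatible_system S -> (forall s, s \in S -> 0 <= alpha s) ->
  forall x, is_lipschitz (d_alpha S alpha) x ->
  exists c, exists2 t, (forall s, s \in S -> -1 <= t s <= 1) &
    forall k, x k = c + \sum_(s in S) alpha s * t s * ind R (split_side s) k.
Proof.
have [n] := ubnP #|S|; elim: n S => // n IH S ltSn splitS compS alpha_ge0 x lipx.
have [S0|[s0 Ss0]] := set_0Vmem S.
  have xE i j : x i = x j.
    by apply/le_anti; have := lipx i j; have := lipx j i;
       rewrite /d_alpha S0 !big_set0 !subr_le0 => -> ->.
  exists (if [pick k] is Some k then x k else 0), (fun _ => 0) => [s|k].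
    by rewrite S0 inE.
  by rewrite S0 big_set0 addr0; case: pickP => [k' _|/(_ k)].
set A := split_side s0; set S' := S :\ s0.
have [s0E _ _] := split_sideP (forall_inP splitS s0 Ss0).
have S'S s : s \in S' -> s \in S by rewrite inE => /andP [].
have splitS' : split_system S'.
  by apply/forall_inP => s /S'S; apply: (forall_inP splitS).
have compS' : compatible_system S'.
  apply/forall_inP => s1 /S'S S1; apply/forall_inP => s2 /S'S S2.
  exact: (forall_inP (forall_inP compS s1 S1) s2 S2).
have d'4 : cut_four_point A (d_alpha S' alpha).
  apply: d_alpha_four_point => // s Ss; first exact/alpha_ge0/S'S.
  by rewrite -s0E; apply: (forall_inP (forall_inP compS s0 Ss0)); apply: S'S.
have [t0 t0_bound lipx'] : exists2 t0, -1 <= t0 <= 1 &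
    is_lipschitz (d_alpha S' alpha) (fun k => x k - alpha s0 * t0 * ind R A k).
  apply: lipschitz_peel_cut => // [|i j]; first exact: alpha_ge0.
  by rewrite -split_deltaE -s0E -d_alphaD1.
have ltS'n : (#|S'| < n)%N by move: ltSn; rewrite (cardsD1 s0 S) Ss0.
have [c [t t_bound xE]] := IH S' ltS'n splitS' compS'
  (fun s Ss => alpha_ge0 s (S'S s Ss)) _ lipx'.
exists c, (fun s => if s == s0 then t0 else t s) => [s Ss|k].
  by case: eqP => // /eqP ns0; apply: t_bound; rewrite !inE ns0.
rewrite (big_setD1 s0 Ss0) /= eqxx -/S' -/A addrCA.
rewrite (eq_bigr (fun s => alpha s * t s * ind R (split_side s) k)); last first.
  by move=> s; rewrite !inE => /andP [/negbTE ->].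
by rewrite -xE; ring.
Qed.

End Decomposition.

Section Vertices.
Context {R : realFieldType} {T : finType}.
Implicit Types (A : {set T}) (s : {set {set T}}) (p : T -> R).

Lemma sum_ind A : \sum_k ind R A k = #|A|%:R.
Proof. by rewrite /ind -big_mkcond /= sumr_const. Qed.

Lemma split_vertexE A k : (0 < #|T|)%N ->
  split_vertex R A k = ind R A k - #|A|%:R / #|T|%:R.
Proof.
move=> T_gt0; have n_neq0 : (#|T|%:R : R) != 0 by rewrite pnatr_eq0 -lt0n.
have cardC : (#|~: A|%:R : R) = #|T|%:R - #|A|%:R by rewrite -(cardsC A) natrD; ring.
by rewrite /split_vertex cardC /ind inE; case: (k \in A) => /=; field.
Qed.

Lemma split_vertexC A k : split_vertex R (~: A) k = - split_vertex R A k.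
Proof. by rewrite /split_vertex setCK; ring. Qed.

Lemma split_vertexB A i j :
  split_vertex R A i - split_vertex R A j = ind R A i - ind R A j.
Proof.
have T_gt0 : (0 < #|T|)%N by apply/card_gt0P; exists i.
by rewrite !split_vertexE //; ring.
Qed.

Lemma sum_split_vertex A : \sum_k split_vertex R A k = 0.
Proof.
have [T0|T_gt0] := posnP #|T|; first by rewrite big1 // => k _; have := card0_eq T0 k.
have n_neq0 : (#|T|%:R : R) != 0 by rewrite pnatr_eq0 -lt0n.
rewrite (eq_bigr _ (fun k _ => split_vertexE A k T_gt0)) sumrB sum_ind sumr_const.
by rewrite -mulr_natr; field.
Qed.

Lemma in_S_sigma_sum {s p} : in_S_sigma s p -> \sum_k p k = 0.
Proof.
case=> lam [_ [_ pE]]; rewrite (eq_bigr _ (fun k _ => pE k)) exchange_big /=.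
by rewrite big1 // => A _; rewrite -mulr_sumr sum_split_vertex mulr0.
Qed.

Lemma in_S_sigma_lipschitz {s p} : is_split s -> in_S_sigma s p ->
  is_lipschitz (split_delta R s) p.
Proof.
move=> /split_sideP [sE _ _] [lam [lam_ge0 [lam_sum1 pE]]] i j.
have ->: p i - p j = \sum_(A in s) lam A * (ind R A i - ind R A j).
  by rewrite !pE -sumrB; apply: eq_bigr => A _; rewrite -mulrBr split_vertexB.
rewrite [in X in _ <= X]sE split_deltaE.
have sideE A : A \in s -> A = split_side s \/ A = ~: split_side s.
  by rewrite {1}sE !inE => /orP [] /eqP; [left | right].
case: eqP => [same|_].
  by rewrite big1 // => A /sideE [] ->; rewrite /ind ?inE same subrr mulr0.
rewrite -lam_sum1; apply: ler_sum => A As; rewrite -[X in _ <= X]mulr1.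
apply: ler_wpM2l; first exact: lam_ge0.
by rewrite /ind; case: ifP; case: ifP => _ _; lra.
Qed.

Lemma in_S_sigma_segment s (t : R) : is_split s -> -1 <= t <= 1 ->
  in_S_sigma s (fun k => t * split_vertex R (split_side s) k).
Proof.
move=> /split_sideP [sE A0 _] /andP [t_ge t_le]; set A := split_side s in sE A0 *.
have AC : A != ~: A.
  by apply: contraNneq A0 => AE; rewrite -[A]setIid {2}AE setICr.
have sum2 (F : {set T} -> R) : \sum_(B in s) F B = F A + F (~: A).
  by rewrite {1}sE big_setU1 ?big_set1 // inE.
exists (fun B => if B == A then (1 + t) / 2 else (1 - t) / 2).
rewrite sum2 eqxx eq_sym (negbTE AC); split; last split.
- by move=> B _; case: ifP => _; lra.
- lra.
- by move=> k; rewrite sum2 eqxx eq_sym (negbTE AC) split_vertexC; field.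
Qed.

(* Adding the constant c is invisible after centering, and centering 1_A gives
   1_A - |A|/n, which is the vertex of S_sigma attached to A. *)
Lemma centered_ind_combination {I : finType} {S : {set I}} {w : I -> R}
    {A : I -> {set T}} {c : R} {x : T -> R} :
  \sum_k x k = 0 -> (forall k, x k = c + \sum_(s in S) w s * ind R (A s) k) ->
  forall k, x k = \sum_(s in S) w s * split_vertex R (A s) k.
Proof.
move=> sum0 xE k.
have T_gt0 : (0 < #|T|)%N by apply/card_gt0P; exists k.
have n_neq0 : (#|T|%:R : R) != 0 by rewrite pnatr_eq0 -lt0n.
have cE : \sum_(s in S) w s * #|A s|%:R = - (c * #|T|%:R).
  move: sum0; rewrite (eq_bigr _ (fun k _ => xE k)) big_split /= exchange_big /=.
  under [X in _ + X]eq_bigr => s _ do rewrite -mulr_sumr sum_ind.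
  by rewrite sumr_const mulr_natr => /eqP; rewrite addrC addr_eq0 => /eqP.
under eq_bigr => s _ do rewrite split_vertexE // mulrBr.
rewrite sumrB xE [RHS]addrC; congr (_ + _).
under eq_bigr => s _ do rewrite mulrA.
by rewrite -mulr_suml cE mulNr opprK mulfK.
Qed.

End Vertices.

Section Zonotope.
Context {R : realFieldType} {T : finType}.
Implicit Types (S : {set {set {set T}}}) (alpha : {set {set T}} -> R) (x : T -> R).

Lemma eq_LIP x {d d' : T -> T -> R} : d =2 d' -> LIP d x <-> LIP d' x.
Proof.
by move=> dd'; split=> -[sum0 lip]; split=> // i j; [rewrite -dd' | rewrite dd'].
Qed.

Lemma minkowski_sum_LIP S alpha x :
  split_system S -> (forall s, s \in S -> 0 <= alpha s) ->
  in_minkowski_sum S alpha x -> LIP (d_alpha S alpha) x.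
Proof.
move=> /forall_inP splitS alpha_ge0 [p [pS xE]]; split.
  rewrite (eq_bigr _ (fun k _ => xE k)) exchange_big /= big1 // => s Ss.
  by rewrite -mulr_sumr (in_S_sigma_sum (pS s Ss)) mulr0.
move=> i j; rewrite !xE /d_alpha -sumrB; apply: ler_sum => s Ss.
rewrite -mulrBr; apply: ler_wpM2l; first exact: alpha_ge0.
exact: in_S_sigma_lipschitz (splitS s Ss) (pS s Ss) i j.
Qed.

Lemma LIP_minkowski_sum S alpha x :
  split_system S -> compatible_system S -> (forall s, s \in S -> 0 <= alpha s) ->
  LIP (d_alpha S alpha) x -> in_minkowski_sum S alpha x.
Proof.
move=> splitS compS alpha_ge0 [sum0 lipx].
have [c [t t_bound xE]] :=
  d_alpha_lipschitz_decomposition S alpha splitS compS alpha_ge0 x lipx.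
exists (fun s k => t s * split_vertex R (split_side s) k); split.
  move=> s Ss; apply: in_S_sigma_segment; last exact: t_bound.
  exact: (forall_inP splitS).
move=> k; rewrite (centered_ind_combination sum0 xE).
by apply: eq_bigr => s _; rewrite mulrA.
Qed.

End Zonotope.

Theorem mainTheorem4 (R : realFieldType) (T : finType) (d : T -> T -> R)
  (S : {set {set {set T}}}) (alpha : {set {set T}} -> R) :
  is_pseudometric d ->
  split_system S -> compatible_system S ->
  (forall s, s \in S -> 0 < alpha s) ->
  (forall i j, d i j = d_alpha S alpha i j) ->
  forall x : T -> R, LIP d x <-> in_minkowski_sum S alpha x.
Proof.
(* d = d_alpha, so the pseudometric axioms are automatic. *)
move=> _ splitS compS alpha_gt0 dE x.
have alpha_ge0 s : s \in S -> 0 <= alpha s by move/alpha_gt0/ltW.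
rewrite (eq_LIP x dE); split.
- exact: LIP_minkowski_sum.
- exact: minkowski_sum_LIP.
Qed.
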